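(* Let $G$ be a graph and $l\ge1$ an integer. If $G$ has three distinct closed non-backtracking walks, each of length $l$, each starting and ending at the same vertex $v$, then $\mathrm{Abl}(G)\le 4l$.
   Context: A graph is $G=(V_G,E_G,t_G,h_G)$ with vertex set, edge set and tail/head maps (loops and multiple edges allowed). Directed edges are pairs $(e,\pm)$, with $(e,+)$ going from $t(e)$ to $h(e)$ and $(e,-)$ its inverse. A walk of length $m\ge1$ is a sequence $(u_1,\dots,u_m)$ of directed edges with the head of $u_i$ equal to the tail of $u_{i+1}$; it is closed if its start and end vertices coincide and non-backtracking if $u_{i+1}$ is never the inverse of $u_i$. The abelian girth $\mathrm{Abl}(G)$ is the minimum $m\ge1$ such that there is a closed non-backtracking walk $(u_1,\dots,u_m)$ in which, for every edge $e$, $(e,+)$ appears the same number of times as $(e,-)$ ($\infty$ if none exists). *)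

From mathcomp Require Import all_boot.
Set Implicit Arguments. Unset Strict Implicit. Unset Printing Implicit Defensive.

(* A graph is given by a vertex type V, an edge type E (both with decidable
   equality; loops and multiple edges allowed) and tail/head maps t h : E -> V.
   A directed edge is a pair (e, b) : E * bool, with (e, true) = (e,+) going
   from t e to h e, and (e, false) = (e,-) its inverse. *)

Section Graphs.
Variables (V E : eqType) (t h : E -> V).

Definition dtail (d : E * bool) : V := if d.2 then t d.1 else h d.1.
Definition dhead (d : E * bool) : V := if d.2 then h d.1 else t d.1.
Definition dinv (d : E * bool) : E * bool := (d.1, ~~ d.2).

Definition is_walk (w : seq (E * bool)) : bool :=
  if w is d :: w' then path (fun a b => dhead a == dtail b) d w' else false.

Definition walk_start (w : seq (E * bool)) (v : V) : bool :=
  if w is d :: _ then dtail d == v else false.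

Definition walk_end (w : seq (E * bool)) (v : V) : bool :=
  if w is d :: w' then dhead (last d w') == v else false.

Definition is_closed_walk (w : seq (E * bool)) : bool :=
  if w is d :: w' then is_walk w && (dhead (last d w') == dtail d) else false.

Definition non_backtracking (w : seq (E * bool)) : bool :=
  sorted (fun a b => b != dinv a) w.

Definition balanced (w : seq (E * bool)) : Prop :=
  forall e : E, count_mem (e, true) w = count_mem (e, false) w.

Definition abelian_walk (w : seq (E * bool)) : Prop :=
  [/\ is_closed_walk w, non_backtracking w & balanced w].

(* Abl(G) <= k  (Abl(G) = min length of an abelian closed NB walk, or infinity) *)
Definition Abl_le (k : nat) : Prop :=
  exists w : seq (E * bool), abelian_walk w /\ 1 <= size w <= k.

Definition cnb_walk_at (v : V) (l : nat) (w : seq (E * bool)) : Prop :=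
  [/\ is_closed_walk w, non_backtracking w, size w = l,
      walk_start w v & walk_end w v].

End Graphs.

From mathcomp Require Import all_boot zify.
Set Implicit Arguments. Unset Strict Implicit. Unset Printing Implicit Defensive.

(* Of three distinct walks, two, a and b, satisfy b <> a and b <> a^-1.  The
   commutator a b a^-1 b^-1 is a closed balanced walk of length 4l at v.  Free
   reduction (cancelling adjacent inverse steps) keeps it closed at v and
   balanced and makes it non-backtracking.  It cannot reduce to the empty word:
   then a b and b a would have the same reduced form, and comparing the two
   reduced forms of words built from non-backtracking a, b of equal length
   forces b = a or b = a^-1. *)

Lemma eq_from_take_drop (T : Type) (x y : seq T) i j :
  take i x = take i y -> drop j x = drop j y -> j <= i -> x = y.
Proof.
move=> eq_take eq_drop le_ji.
rewrite -(cat_take_drop i x) -(cat_take_drop i y) eq_take; congr (_ ++ _).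
by rewrite -(subnK le_ji) -!drop_drop eq_drop.
Qed.

Section Reduction.
Variables (V E : eqType) (t h : E -> V).
Local Notation D := (E * bool)%type.
Local Notation dtail := (dtail t h).
Local Notation dhead := (dhead t h).

Lemma dinvK : involutive (@dinv E).
Proof. by case=> e b; rewrite /dinv /= negbK. Qed.

Lemma eq_dinv (x d : D) : (x == dinv d) = (d == dinv x).
Proof. by apply/eqP/eqP => ->; rewrite dinvK. Qed.

Lemma dinv_eq_pair d (e : E) b : (dinv d == (e, b)) = (d == (e, ~~ b)).
Proof. by rewrite -(inj_eq (can_inj dinvK)) dinvK. Qed.

Lemma dtail_dinv d : dtail (dinv d) = dhead d.
Proof. by case: d => e []. Qed.

Lemma dhead_dinv d : dhead (dinv d) = dtail d.
Proof. by case: d => e []. Qed.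

Lemma non_backtracking_rev (w : seq D) : non_backtracking (rev w) = non_backtracking w.
Proof.
rewrite /non_backtracking -rev_sorted revK.
by case: w => //= x w; apply: eq_path => a b; rewrite eq_dinv.
Qed.

Lemma non_backtracking_rcons_cat (p q : seq D) x d :
  non_backtracking (rcons p x ++ d :: q) =
  [&& non_backtracking (rcons p x), d != dinv x & non_backtracking (d :: q)].
Proof. by case: p => [|y p] /=; rewrite ?cat_path ?rcons_path ?last_rcons /= ?andbA. Qed.

Definition winv (w : seq D) := rev (map (@dinv E) w).

Lemma winvK : involutive winv.
Proof. by move=> w; rewrite /winv map_rev revK (mapK dinvK). Qed.

Lemma winv_cat u w : winv (u ++ w) = winv w ++ winv u.
Proof. by rewrite /winv map_cat rev_cat. Qed.

Lemma winv_cons d w : winv (d :: w) = rcons (winv w) (dinv d).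
Proof. by rewrite /winv /= rev_cons. Qed.

Lemma size_winv w : size (winv w) = size w.
Proof. by rewrite /winv size_rev size_map. Qed.

Lemma count_winv (e : E) b w : count_mem (e, b) (winv w) = count_mem (e, ~~ b) w.
Proof. by rewrite /winv count_rev count_map; apply: eq_count => x /=; rewrite dinv_eq_pair. Qed.

(* The stack holds the reduced word read backwards. *)
Definition push (s : seq D) (d : D) :=
  if s is x :: s' then (if x == dinv d then s' else d :: s) else [:: d].

Definition reduce := foldl push.

Lemma reduce_cat s u w : reduce s (u ++ w) = reduce (reduce s u) w.
Proof. exact: foldl_cat. Qed.

Lemma non_backtracking_push s d : non_backtracking s -> non_backtracking (push s d).
Proof.
case: s => [|x s] //=; case: ifP => [_ /path_sorted // | x_d nb_s].
by rewrite /= nb_s andbT x_d.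
Qed.

Lemma non_backtracking_reduce s w : non_backtracking s -> non_backtracking (reduce s w).
Proof. by elim: w s => //= d w IH s nb_s; apply/IH/non_backtracking_push. Qed.

Lemma push_dinv s d : non_backtracking s -> push (push s d) (dinv d) = s.
Proof.
case: s => [|x s] /=; first by rewrite dinvK eqxx.
case: ifP => [/eqP -> | _]; last by rewrite /= dinvK eqxx.
by case: s => [|y s] //= /andP [/negbTE ->].
Qed.

Lemma reduce_cancel s u : non_backtracking s -> reduce s (u ++ winv u) = s.
Proof.
elim: u s => [|d u IH] s nb_s //.
rewrite winv_cons -cats1 catA reduce_cat [reduce s _]/= IH /=; first exact: push_dinv.
exact: non_backtracking_push.
Qed.

Lemma reduce_non_backtracking s w :
  non_backtracking (rev s ++ w) -> reduce s w = rev w ++ s.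
Proof.
elim: w s => [|d w IH] s /= nb_sw //.
have -> : push s d = d :: s.
  case: s nb_sw => [|x s] //=.
  by rewrite rev_cons non_backtracking_rcons_cat eq_dinv => /and3P [_ /negbTE -> _].
by rewrite IH rev_cons ?cat_rcons.
Qed.

Lemma reduce_nil_cat p q : non_backtracking p -> reduce [::] (p ++ q) = reduce (rev p) q.
Proof. by move=> nb_p; rewrite reduce_cat (@reduce_non_backtracking [::] p) ?cats0. Qed.

Lemma reduceP s w : non_backtracking s -> non_backtracking w -> exists k,
  [/\ k <= size s, k <= size w, take k w = map (@dinv E) (take k s)
   & reduce s w = rev (drop k w) ++ drop k s].
Proof.
elim: w s => [|d w IH] s nb_s nb_w; first by exists 0; rewrite !take0 !drop0; split.
case: s nb_s => [|x s] nb_s.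
  by exists 0; rewrite reduce_non_backtracking ?cats0.
have [x_d | x_d] := eqVneq x (dinv d).
  have [k [k_s k_w take_k red_k]] := IH s (path_sorted nb_s) (path_sorted nb_w).
  by exists k.+1; rewrite /= take_k x_d dinvK eqxx /=; split.
exists 0; rewrite /reduce /= (negbTE x_d) -/(reduce _ _) reduce_non_backtracking ?drop0 //.
  by rewrite rev_cons cat_rcons.
rewrite rev_cons cat_rcons rev_cons non_backtracking_rcons_cat -rev_cons.
by rewrite non_backtracking_rev eq_dinv x_d nb_s.
Qed.

Lemma size_reduce s w : size (reduce s w) <= size s + size w.
Proof.
elim: w s => [|d w IH] s /=; first by rewrite addn0.
apply: leq_trans (IH _) _; rewrite addnS -addSn leq_add2r.
by case: s => [|x s] //=; case: ifP => // _; apply: leqW.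
Qed.

Lemma count_push (e : E) s d :
  count_mem (e, true) (push s d) + count_mem (e, false) (d :: s) =
  count_mem (e, false) (push s d) + count_mem (e, true) (d :: s).
Proof.
case: s => [|x s] /=; first by lia.
case: ifP => [/eqP -> | _] /=; last by lia.
rewrite !dinv_eq_pair /=; lia.
Qed.

Lemma count_reduce (e : E) s w :
  count_mem (e, true) (reduce s w) + count_mem (e, false) (w ++ s) =
  count_mem (e, false) (reduce s w) + count_mem (e, true) (w ++ s).
Proof.
elim: w s => [|d w IH] s; first by rewrite /= addnC.
have := IH (push s d); have := count_push e s d; rewrite /= !count_cat /=; lia.
Qed.

Fixpoint walk_between (x : V) (w : seq D) (y : V) : bool :=
  if w is d :: w' then (dtail d == x) && walk_between (dhead d) w' y else x == y.

Lemma walk_betweenE x d w y :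
  walk_between x (d :: w) y =
  [&& dtail d == x, path (fun a b => dhead a == dtail b) d w & dhead (last d w) == y].
Proof.
elim: w x d => [|e w IH] x d; first by [].
rewrite -[LHS]/((dtail d == x) && walk_between (dhead d) (e :: w) y) IH /=.
by rewrite (eq_sym (dtail e)) !andbA.
Qed.

Lemma walk_between_rcons x w d y :
  walk_between x (rcons w d) y = walk_between x w (dtail d) && (dhead d == y).
Proof.
elim: w x => [|e w IH] x /=; first by rewrite eq_sym.
by rewrite IH andbA.
Qed.

Lemma walk_between_cat x u y w z :
  walk_between x u y -> walk_between y w z -> walk_between x (u ++ w) z.
Proof.
elim: u x => [|d u IH] x /=; first by move/eqP ->.
by case/andP=> -> /IH.
Qed.

Lemma walk_between_winv x w y : walk_between x w y -> walk_between y (winv w) x.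
Proof.
elim: w x => [|d w IH] x /=; first by move/eqP ->; rewrite eqxx.
case/andP=> /eqP tail_d /IH w_inv.
by rewrite winv_cons walk_between_rcons dtail_dinv dhead_dinv tail_d w_inv eqxx.
Qed.

Lemma walk_between_reduce x s y w z :
  walk_between x (rev s) y -> walk_between y w z -> walk_between x (rev (reduce s w)) z.
Proof.
elim: w s y => [|d w IH] s y /=; first by move=> ? /eqP <-.
move=> s_xy /andP [/eqP tail_d w_z]; apply: IH w_z.
case: s s_xy => [|e s] /=; first by move/eqP ->; rewrite tail_d !eqxx.
rewrite rev_cons walk_between_rcons; case: ifP => [/eqP -> | _].
  by rewrite dtail_dinv => /andP [].
by rewrite !rev_cons !walk_between_rcons tail_d eqxx andbT.
Qed.

Lemma walk_between_cnb v l w : cnb_walk_at t h v l w -> walk_between v w v.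
Proof.
case; case: w => [|d w] // /andP [w_path _] _ _ /eqP tail_d /eqP head_d.
by rewrite walk_betweenE tail_d head_d !eqxx andbT.
Qed.

Lemma closed_walk_between x w : walk_between x w x -> w != [::] -> is_closed_walk t h w.
Proof.
case: w => [|d w] //; rewrite walk_betweenE => /and3P [/eqP tail_d w_path /eqP head_d] _.
by rewrite /= w_path head_d tail_d eqxx.
Qed.

Lemma reduce_commute a b :
  non_backtracking a -> non_backtracking b -> size a = size b ->
  reduce [::] (a ++ b) = reduce [::] (b ++ a) -> a = b \/ b = winv a.
Proof.
move=> nb_a nb_b size_ab; rewrite !reduce_nil_cat //.
have nb_ra : non_backtracking (rev a) by rewrite non_backtracking_rev.
have nb_rb : non_backtracking (rev b) by rewrite non_backtracking_rev.
have [k [k_a k_b take_b ->]] := reduceP nb_ra nb_b.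
have [m [m_b m_a take_a ->]] := reduceP nb_rb nb_a.
move: k_a m_b; rewrite !size_rev -size_ab => k_a m_b eq_red.
have m_k : m = k.
  by move/(congr1 size): eq_red; rewrite !size_cat !size_rev !size_drop !size_rev -size_ab; lia.
subst m; clear m_a m_b; move/eqP: eq_red; rewrite eqseq_cat ?size_rev ?size_drop -?size_ab //.
case/andP=> /eqP/(can_inj revK) drop_ba /eqP; rewrite !drop_rev -size_ab.
move/(can_inj revK) => take_ab.
have [le_k | lt_k] := leqP k (size a - k).
  by left; apply: eq_from_take_drop take_ab (esym drop_ba) le_k.
right; apply: (@eq_from_take_drop _ _ _ k (size a - k)); last by lia.
  by rewrite take_b /winv map_take map_rev.
rewrite /winv drop_rev size_map (subKn k_a) -map_take take_a -map_comp.
by rewrite (eq_map dinvK) map_id take_rev revK size_ab.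
Qed.

Lemma reduce_commutator_nil a b :
  non_backtracking a -> non_backtracking b -> size a = size b ->
  reduce [::] (a ++ b ++ winv a ++ winv b) = [::] -> a = b \/ b = winv a.
Proof.
move=> nb_a nb_b size_ab red_nil; apply: reduce_commute => //.
have nb_ab : non_backtracking (reduce [::] (a ++ b)) by apply: non_backtracking_reduce.
have cancel_ab : reduce (reduce [::] (a ++ b)) (winv (b ++ a)) = [::].
  by rewrite -reduce_cat winv_cat -catA.
by rewrite -(reduce_cancel (winv (b ++ a)) nb_ab) winvK reduce_cat cancel_ab.
Qed.

End Reduction.

Lemma Abl_le_commutator (V E : eqType) (t h : E -> V) v l (a b : seq (E * bool)) :
  cnb_walk_at t h v l a -> cnb_walk_at t h v l b -> a != b -> b != winv a ->
  Abl_le t h (4 * l).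
Proof.
move=> cnb_a cnb_b neq_ab neq_ba.
have [_ nb_a size_a _ _] := cnb_a; have [_ nb_b size_b _ _] := cnb_b.
set w := a ++ b ++ winv a ++ winv b.
set r := rev (reduce [::] w).
have walk_w : walk_between t h v w v.
  have [walk_a walk_b] := (walk_between_cnb cnb_a, walk_between_cnb cnb_b).
  apply: (walk_between_cat walk_a); apply: (walk_between_cat walk_b).
  exact: walk_between_cat (walk_between_winv walk_a) (walk_between_winv walk_b).
have r_nil : r != [::].
  rewrite /r -size_eq0 size_rev size_eq0; apply/eqP => red_nil.
  have [eq_ab | eq_ba] := reduce_commutator_nil nb_a nb_b (etrans size_a (esym size_b)) red_nil.
    by rewrite eq_ab eqxx in neq_ab.
  by rewrite eq_ba eqxx in neq_ba.
exists r; split; first split.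
- exact: closed_walk_between (walk_between_reduce (s := [::]) (eqxx v) walk_w) r_nil.
- by rewrite non_backtracking_rev non_backtracking_reduce.
- move=> e; have := count_reduce e [::] w.
  by rewrite !count_rev cats0 !count_cat !count_winv /=; lia.
- rewrite lt0n size_eq0 r_nil /= size_rev.
  by apply: leq_trans (size_reduce _ _) _; rewrite /= !size_cat !size_winv size_a size_b; lia.
Qed.

Theorem lemma3p4 (V E : eqType) (t h : E -> V) (l : nat) (v : V)
  (w1 w2 w3 : seq (E * bool)) :
  1 <= l ->
  cnb_walk_at t h v l w1 -> cnb_walk_at t h v l w2 -> cnb_walk_at t h v l w3 ->
  w1 != w2 -> w1 != w3 -> w2 != w3 ->
  Abl_le t h (4 * l).
Proof.
move=> _ cnb_1 cnb_2 cnb_3 neq_12 neq_13 neq_23.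
have [eq_2 | neq_2] := eqVneq w2 (winv w1).
  by apply: (Abl_le_commutator cnb_1 cnb_3 neq_13); rewrite -eq_2 eq_sym.
exact: Abl_le_commutator cnb_1 cnb_2 neq_12 neq_2.
Qed.
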